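(* Let $\mathcal{A},\mathcal{C}$ be small categories and let $\Gamma,P:\mathcal{A}^{op}\times\mathcal{A}\times\mathcal{C}^{op}\times\mathcal{C}\to\mathbf{Set}$ be functors. Let $h$ be a dinatural transformation, dinatural in $(z,x)\in\mathcal{A}\times\mathcal{C}$, from $(z',z,x',x)\mapsto\Gamma(z',z,x',x)$ to $(z',z,x',x)\mapsto P(z',z,x',x)$, with components $h_{z,x}:\Gamma(z,z,x,x)\to P(z,z,x,x)$. Then there is a dinatural transformation $J(h)$, dinatural in $(a,b,x)\in\mathcal{A}^{op}\times\mathcal{A}\times\mathcal{C}$, from the dipresheaf $(a',b',x',a,b,x)\mapsto \hom_{\mathcal{A}}(a,b)\times\Gamma(b',a',x',x)$ to the dipresheaf $(a',b',x',a,b,x)\mapsto P(a,b,x',x)$ (here $a'\in\mathcal{A}$, $b'\in\mathcal{A}^{op}$, $x'\in\mathcal{C}^{op}$ are the contravariant arguments), with components $$J(h)_{a,b,x}:\hom_{\mathcal{A}}(a,b)\times\Gamma(b,a,x,x)\to P(a,b,x,x),$$ satisfying the computation rule $J(h)_{z,z,x}(\mathrm{id}_z,k)=h_{z,x}(k)$ for all objects $z\in\mathcal{A}$, $x\in\mathcal{C}$ and all $k\in\Gamma(z,z,x,x)$.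
   Context: A dipresheaf on a category $\mathcal{B}$ is a functor $\mathcal{B}^{op}\times\mathcal{B}\to\mathbf{Set}$; more generally a difunctor is a functor $\mathcal{B}^{op}\times\mathcal{B}\to\mathcal{D}$. For difunctors $F,G:\mathcal{B}^{op}\times\mathcal{B}\to\mathcal{D}$, a dinatural transformation $\alpha:F\Rightarrow G$ is a family of morphisms $\alpha_x:F(x,x)\to G(x,x)$, $x\in\mathcal{B}$, such that for every $f:a\to b$ in $\mathcal{B}$: $G(f,\mathrm{id}_b)\circ\alpha_b\circ F(\mathrm{id}_b,f)=G(\mathrm{id}_a,f)\circ\alpha_a\circ F(f,\mathrm{id}_a)$ as maps $F(b,a)\to G(a,b)$. When $\mathcal{B}$ is a product of categories (e.g. $\mathcal{A}\times\mathcal{C}$ or $\mathcal{A}^{op}\times\mathcal{A}\times\mathcal{C}$), a functor $\mathcal{B}^{op}\times\mathcal{B}\to\mathbf{Set}$ is written with its arguments reordered, and ''dinatural in $(z,x)$'' means dinatural as a family indexed by objects of the product category. Note $\hom_{\mathcal{A}}(a,b)$ is covariant in $a\in\mathcal{A}^{op}$ and $b\in\mathcal{A}$. *)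

Set Implicit Arguments.
Unset Strict Implicit.

Record Cat : Type := {
  ob :> Type;
  hom : ob -> ob -> Type;
  idm : forall a, hom a a;
  comp : forall a b c, hom b c -> hom a b -> hom a c;
  comp_idl : forall a b (f : hom a b), comp (idm b) f = f;
  comp_idr : forall a b (f : hom a b), comp f (idm a) = f;
  comp_assoc : forall a b c d (f : hom a b) (g : hom b c) (h : hom c d),
      comp h (comp g f) = comp (comp h g) f }.
Arguments hom {c} a b : rename.
Arguments idm {c} a : rename.
Arguments comp {c a b c0} g f : rename.

Definition opCat (C : Cat) : Cat.
Proof.
refine {| ob := ob C; hom := fun a b => @hom C b a; idm := fun a => idm a;
          comp := fun a b c g f => comp f g |}.
- intros; apply comp_idr.
- intros; apply comp_idl.
- intros; symmetry; apply comp_assoc.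
Defined.

Definition prodCat (C D : Cat) : Cat.
Proof.
refine {| ob := (ob C * ob D)%type;
          hom := fun p q => (@hom C (fst p) (fst q) * @hom D (snd p) (snd q))%type;
          idm := fun p => (idm (fst p), idm (snd p));
          comp := fun p q r g f => (comp (fst g) (fst f), comp (snd g) (snd f)) |}.
- intros p q [f1 f2]; simpl; rewrite !comp_idl; reflexivity.
- intros p q [f1 f2]; simpl; rewrite !comp_idr; reflexivity.
- intros p q r s [f1 f2] [g1 g2] [h1 h2]; simpl; rewrite !comp_assoc; reflexivity.
Defined.

Record Functor (C D : Cat) : Type := {
  fo :> ob C -> ob D;
  fm : forall a b, @hom C a b -> @hom D (fo a) (fo b);
  fm_id : forall a, fm (idm a) = idm (fo a);
  fm_comp : forall a b c (g : @hom C b c) (f : @hom C a b),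
      fm (comp g f) = comp (fm g) (fm f) }.
Arguments fm {C D} F {a b} f : rename.

Record SetFunctor (C : Cat) : Type := {
  sob :> ob C -> Type;
  smap : forall a b, @hom C a b -> sob a -> sob b;
  smap_id : forall a (x : sob a), smap (idm a) x = x;
  smap_comp : forall a b c (g : @hom C b c) (f : @hom C a b) (x : sob a),
      smap (comp g f) x = smap g (smap f x) }.
Arguments smap {C} F {a b} f x : rename.

Definition precomp (C D : Cat) (F : SetFunctor D) (R : Functor C D) : SetFunctor C.
Proof.
refine {| sob := fun a => F (R a); smap := fun a b f x => smap F (fm R f) x |}.
- intros a x; simpl; rewrite fm_id; apply smap_id.
- intros a b c g f x; simpl; rewrite fm_comp; apply smap_comp.
Defined.

Definition prodSF (C : Cat) (F G : SetFunctor C) : SetFunctor C.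
Proof.
refine {| sob := fun a => (F a * G a)%type;
          smap := fun a b f x => (smap F f (fst x), smap G f (snd x)) |}.
- intros a [x y]; simpl; rewrite !smap_id; reflexivity.
- intros a b c g f [x y]; simpl; rewrite !smap_comp; reflexivity.
Defined.

Definition homSF (A : Cat) : SetFunctor (prodCat (opCat A) A).
Proof.
refine (@Build_SetFunctor (prodCat (opCat A) A)
          (fun p : ob (opCat A) * ob A => @hom A (fst p) (snd p))
          (fun (p q : ob (opCat A) * ob A) (f : @hom (prodCat (opCat A) A) p q)
               (k : @hom A (fst p) (snd p)) =>
             comp (snd f) (comp k (fst f))) _ _).
- intros [a b] k; simpl; rewrite comp_idl, comp_idr; reflexivity.
- intros [a1 b1] [a2 b2] [a3 b3] [g1 g2] [f1 f2] k; simpl.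
  rewrite !comp_assoc; reflexivity.
Defined.

Definition dipresheaf (B : Cat) := SetFunctor (prodCat (opCat B) B).

(** alpha : F => G is dinatural iff for every f : a -> b in B,
    G(f,id_b) o alpha_b o F(id_b,f) = G(id_a,f) o alpha_a o F(f,id_a)
    as maps F(b,a) -> G(a,b). *)
Definition dinatural (B : Cat) (F G : dipresheaf B)
    (alpha : forall x : ob B, F (x, x) -> G (x, x)) : Prop :=
  forall (a b : ob B) (f : @hom B a b) (y : F (b, a)),
    smap G (a := (b, b)) (b := (a, b)) (f, idm b)
         (alpha b (smap F (a := (b, a)) (b := (b, b)) (idm b, f) y))
    = smap G (a := (a, a)) (b := (a, b)) (idm a, f)
         (alpha a (smap F (a := (b, a)) (b := (a, a)) (f, idm a) y)).

(** Shorthand for the source category A^op x A x C^op x C of Gamma and P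
    (argument order (z', z, x', x)). *)
Definition quadCat (A C : Cat) : Cat :=
  prodCat (prodCat (prodCat (opCat A) A) (opCat C)) C.

Definition diACCat (A C : Cat) : Cat := prodCat (opCat (prodCat A C)) (prodCat A C).

(** Reordering (A x C)^op x (A x C) -> A^op x A x C^op x C,
    ((z',x'),(z,x)) |-> (z',z,x',x): views Gamma, P as difunctors on A x C. *)
Definition reorderAC_ob (A C : Cat) (p : ob (diACCat A C)) : ob (quadCat A C) :=
  let '((z', x'), (z, x)) := p in (((z', z), x'), x).
Definition reorderAC_hom (A C : Cat) (p q : ob (diACCat A C))
  (f : @hom (diACCat A C) p q) : @hom (quadCat A C) (reorderAC_ob p) (reorderAC_ob q) :=
  match p, q return @hom (diACCat A C) p q ->
                    @hom (quadCat A C) (reorderAC_ob p) (reorderAC_ob q) with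
  | ((_, _), (_, _)), ((_, _), (_, _)) =>
      fun f => let '((u', g'), (u, g)) := f in (((u', u), g'), g)
  end f.
Definition reorderAC (A C : Cat) : Functor (diACCat A C) (quadCat A C).
Proof.
refine (@Build_Functor (diACCat A C) (quadCat A C) (@reorderAC_ob A C) (@reorderAC_hom A C) _ _).
- intros [[? ?] [? ?]]; reflexivity.
- intros [[? ?] [? ?]] [[? ?] [? ?]] [[? ?] [? ?]] [[? ?] [? ?]] [[? ?] [? ?]]; reflexivity.
Defined.

Definition tripCat (A C : Cat) : Cat := prodCat (prodCat (opCat A) A) C.
Definition diTCat (A C : Cat) : Cat := prodCat (opCat (tripCat A C)) (tripCat A C).

Definition projHom_ob (A C : Cat) (p : ob (diTCat A C)) : ob (prodCat (opCat A) A) :=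
  let '(_, ((a, b), _)) := p in (a, b).
Definition projHom_hom (A C : Cat) (p q : ob (diTCat A C))
  (f : @hom (diTCat A C) p q) : @hom (prodCat (opCat A) A) (projHom_ob p) (projHom_ob q) :=
  match p, q return @hom (diTCat A C) p q ->
                    @hom (prodCat (opCat A) A) (projHom_ob p) (projHom_ob q) with
  | (((_, _), _), ((_, _), _)), (((_, _), _), ((_, _), _)) =>
      fun f => let '(_, ((u, v), _)) := f in (u, v)
  end f.
Definition projHom (A C : Cat) : Functor (diTCat A C) (prodCat (opCat A) A).
Proof.
refine (@Build_Functor (diTCat A C) (prodCat (opCat A) A) (@projHom_ob A C) (@projHom_hom A C) _ _).
- intros [[[? ?] ?] [[? ?] ?]]; reflexivity.
- intros [[[? ?] ?] [[? ?] ?]] [[[? ?] ?] [[? ?] ?]] [[[? ?] ?] [[? ?] ?]]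
         [[[? ?] ?] [[? ?] ?]] [[[? ?] ?] [[? ?] ?]]; reflexivity.
Defined.

Definition reorderGamma_ob (A C : Cat) (p : ob (diTCat A C)) : ob (quadCat A C) :=
  let '(((a', b'), x'), ((_, _), x)) := p in (((b', a'), x'), x).
Definition reorderGamma_hom (A C : Cat) (p q : ob (diTCat A C))
  (f : @hom (diTCat A C) p q) : @hom (quadCat A C) (reorderGamma_ob p) (reorderGamma_ob q) :=
  match p, q return @hom (diTCat A C) p q ->
                    @hom (quadCat A C) (reorderGamma_ob p) (reorderGamma_ob q) with
  | (((_, _), _), ((_, _), _)), (((_, _), _), ((_, _), _)) =>
      fun f => let '(((u', v'), g'), (_, g)) := f in (((v', u'), g'), g)
  end f.
Definition reorderGamma (A C : Cat) : Functor (diTCat A C) (quadCat A C).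
Proof.
refine (@Build_Functor (diTCat A C) (quadCat A C) (@reorderGamma_ob A C) (@reorderGamma_hom A C) _ _).
- intros [[[? ?] ?] [[? ?] ?]]; reflexivity.
- intros [[[? ?] ?] [[? ?] ?]] [[[? ?] ?] [[? ?] ?]] [[[? ?] ?] [[? ?] ?]]
         [[[? ?] ?] [[? ?] ?]] [[[? ?] ?] [[? ?] ?]]; reflexivity.
Defined.

Definition reorderP_ob (A C : Cat) (p : ob (diTCat A C)) : ob (quadCat A C) :=
  let '((_, x'), ((a, b), x)) := p in (((a, b), x'), x).
Definition reorderP_hom (A C : Cat) (p q : ob (diTCat A C))
  (f : @hom (diTCat A C) p q) : @hom (quadCat A C) (reorderP_ob p) (reorderP_ob q) :=
  match p, q return @hom (diTCat A C) p q ->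
                    @hom (quadCat A C) (reorderP_ob p) (reorderP_ob q) with
  | (((_, _), _), ((_, _), _)), (((_, _), _), ((_, _), _)) =>
      fun f => let '((_, g'), ((u, v), g)) := f in (((u, v), g'), g)
  end f.
Definition reorderP (A C : Cat) : Functor (diTCat A C) (quadCat A C).
Proof.
refine (@Build_Functor (diTCat A C) (quadCat A C) (@reorderP_ob A C) (@reorderP_hom A C) _ _).
- intros [[[? ?] ?] [[? ?] ?]]; reflexivity.
- intros [[[? ?] ?] [[? ?] ?]] [[[? ?] ?] [[? ?] ?]] [[[? ?] ?] [[? ?] ?]]
         [[[? ?] ?] [[? ?] ?]] [[[? ?] ?] [[? ?] ?]]; reflexivity.
Defined.

Definition JSource (A C : Cat) (Gamma : SetFunctor (quadCat A C)) : dipresheaf (tripCat A C) :=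
  prodSF (precomp (homSF A) (projHom A C)) (precomp Gamma (reorderGamma A C)).

Definition JTarget (A C : Cat) (P : SetFunctor (quadCat A C)) : dipresheaf (tripCat A C) :=
  precomp P (reorderP A C).


(* J(h)_{a,b,x}(f, k) := P(a, f, x, x) (h_{a,x} (Γ(f, a, x, x) k)): move k along f into the
   diagonal Γ(a, a, x, x), apply h there, and move the result back out along f.  By
   functoriality of Γ and P, dinaturality of J(h) along (u, v, g) splits into one statement per
   variable: in b it is mere functoriality (v is absorbed into f), in a it is the dinaturality
   of h along (u, id), and in x its dinaturality along (id, g). *)

Lemma smap_quad_comp (A C : Cat) (F : SetFunctor (quadCat A C))
    (a1 b1 c1 a2 b2 c2 : ob A) (a3 b3 c3 a4 b4 c4 : ob C)
    (w1 : hom b1 a1) (w2 : hom a2 b2) (w3 : hom b3 a3) (w4 : hom a4 b4)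
    (u1 : hom c1 b1) (u2 : hom b2 c2) (u3 : hom c3 b3) (u4 : hom b4 c4)
    (y : F (((a1, a2), a3), a4)) :
  smap F (a := (((b1, b2), b3), b4)) (b := (((c1, c2), c3), c4)) (((u1, u2), u3), u4)
    (smap F (a := (((a1, a2), a3), a4)) (b := (((b1, b2), b3), b4)) (((w1, w2), w3), w4) y)
  = smap F (a := (((a1, a2), a3), a4)) (b := (((c1, c2), c3), c4))
      (((comp w1 u1, comp u2 w2), comp w3 u3), comp u4 w4) y.
Proof.
  symmetry.
  exact (@smap_comp (quadCat A C) F (((a1, a2), a3), a4) (((b1, b2), b3), b4)
           (((c1, c2), c3), c4) (((u1, u2), u3), u4) (((w1, w2), w3), w4) y).
Qed.

Ltac simpl_comp := repeat rewrite ?comp_idl, ?comp_idr, ?comp_assoc in *.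

Section DinaturalExtension.

Variables (A C : Cat) (Gamma P : SetFunctor (quadCat A C)).
Variable h : forall zx : ob (prodCat A C),
  precomp Gamma (reorderAC A C) (zx, zx) -> precomp P (reorderAC A C) (zx, zx).
Hypothesis hdin :
  @dinatural (prodCat A C) (precomp Gamma (reorderAC A C)) (precomp P (reorderAC A C)) h.

Lemma h_dinatural_A (a1 a2 : ob A) (x : ob C) (u : hom a2 a1) (y : Gamma (((a1, a2), x), x)) :
  smap P (a := (((a1, a1), x), x)) (b := (((a2, a1), x), x)) (((u, idm a1), idm x), idm x)
    (h (a1, x) (smap Gamma (a := (((a1, a2), x), x)) (b := (((a1, a1), x), x))
                  (((idm a1, u), idm x), idm x) y))
  = smap P (a := (((a2, a2), x), x)) (b := (((a2, a1), x), x)) (((idm a2, u), idm x), idm x)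
      (h (a2, x) (smap Gamma (a := (((a1, a2), x), x)) (b := (((a2, a2), x), x))
                    (((u, idm a2), idm x), idm x) y)).
Proof. exact (hdin (a2, x) (a1, x) (u, idm x) y). Qed.

Lemma h_dinatural_C (a : ob A) (x1 x2 : ob C) (g : hom x1 x2) (y : Gamma (((a, a), x2), x1)) :
  smap P (a := (((a, a), x2), x2)) (b := (((a, a), x1), x2)) (((idm a, idm a), g), idm x2)
    (h (a, x2) (smap Gamma (a := (((a, a), x2), x1)) (b := (((a, a), x2), x2))
                  (((idm a, idm a), idm x2), g) y))
  = smap P (a := (((a, a), x1), x1)) (b := (((a, a), x1), x2)) (((idm a, idm a), idm x1), g)
      (h (a, x1) (smap Gamma (a := (((a, a), x2), x1)) (b := (((a, a), x1), x1))
                    (((idm a, idm a), g), idm x1) y)).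
Proof. exact (hdin (a, x1) (a, x2) (idm a, g) y). Qed.

Definition dinExtend_at {a b : ob A} {x : ob C} (f : hom a b) (k : Gamma (((b, a), x), x)) :
    P (((a, b), x), x) :=
  smap P (a := (((a, a), x), x)) (b := (((a, b), x), x)) (((idm a, f), idm x), idm x)
    (h (a, x) (smap Gamma (a := (((b, a), x), x)) (b := (((a, a), x), x))
                 (((f, idm a), idm x), idm x) k)).

Definition dinExtend (abx : ob (tripCat A C)) : JSource Gamma (abx, abx) -> JTarget P (abx, abx) :=
  match abx with ((a, b), x) => fun fk => dinExtend_at (fst fk) (snd fk) end.

Lemma dinExtend_at_idm (z : ob A) (x : ob C) (k : Gamma (((z, z), x), x)) :
  dinExtend_at (idm z) k = h (z, x) k.
Proof.
  unfold dinExtend_at.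
  change (((idm z, idm z), idm x), idm x) with (@idm (quadCat A C) (((z, z), x), x)).
  rewrite !smap_id.
  reflexivity.
Qed.

Lemma dinExtend_at_comp_dom (a1 a2 b : ob A) (x : ob C) (f : hom a1 b) (u : hom a2 a1)
    (k : Gamma (((b, a2), x), x)) :
  dinExtend_at (comp f u) k
  = smap P (a := (((a1, b), x), x)) (b := (((a2, b), x), x)) (((u, idm b), idm x), idm x)
      (dinExtend_at f (smap Gamma (a := (((b, a2), x), x)) (b := (((b, a1), x), x))
                         (((idm b, u), idm x), idm x) k)).
Proof.
  pose proof (f_equal
    (smap P (a := (((a2, a1), x), x)) (b := (((a2, b), x), x)) (((idm a2, f), idm x), idm x))
    (h_dinatural_A a1 a2 x u (smap Gamma (a := (((b, a2), x), x)) (b := (((a1, a2), x), x))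
                          (((f, idm a2), idm x), idm x) k))) as slide_u.
  unfold dinExtend_at.
  rewrite !smap_quad_comp in slide_u; rewrite !smap_quad_comp.
  simpl_comp.
  symmetry; exact slide_u.
Qed.

Lemma dinExtend_at_comp_cod (a b1 b2 : ob A) (x : ob C) (f : hom a b1) (v : hom b1 b2)
    (k : Gamma (((b2, a), x), x)) :
  dinExtend_at (comp v f) k
  = smap P (a := (((a, b1), x), x)) (b := (((a, b2), x), x)) (((idm a, v), idm x), idm x)
      (dinExtend_at f (smap Gamma (a := (((b2, a), x), x)) (b := (((b1, a), x), x))
                         (((v, idm a), idm x), idm x) k)).
Proof.
  unfold dinExtend_at.
  rewrite !smap_quad_comp.
  simpl_comp.
  reflexivity.
Qed.

Lemma dinExtend_at_dinatural_C (a b : ob A) (x1 x2 : ob C) (f : hom a b) (g : hom x1 x2)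
    (k : Gamma (((b, a), x2), x1)) :
  smap P (a := (((a, b), x2), x2)) (b := (((a, b), x1), x2)) (((idm a, idm b), g), idm x2)
    (dinExtend_at f (smap Gamma (a := (((b, a), x2), x1)) (b := (((b, a), x2), x2))
                       (((idm b, idm a), idm x2), g) k))
  = smap P (a := (((a, b), x1), x1)) (b := (((a, b), x1), x2)) (((idm a, idm b), idm x1), g)
      (dinExtend_at f (smap Gamma (a := (((b, a), x2), x1)) (b := (((b, a), x1), x1))
                         (((idm b, idm a), g), idm x1) k)).
Proof.
  pose proof (f_equal
    (smap P (a := (((a, a), x1), x2)) (b := (((a, b), x1), x2)) (((idm a, f), idm x1), idm x2))
    (h_dinatural_C a x1 x2 g (smap Gamma (a := (((b, a), x2), x1)) (b := (((a, a), x2), x1))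
                          (((f, idm a), idm x2), idm x1) k))) as slide_g.
  unfold dinExtend_at.
  rewrite !smap_quad_comp in slide_g; rewrite !smap_quad_comp.
  simpl_comp.
  exact slide_g.
Qed.

Lemma dinExtend_dinatural : @dinatural (tripCat A C) (JSource Gamma) (JTarget P) dinExtend.
Proof.
  intros [[a1 b1] x1] [[a2 b2] x2] [[u v] g] [f k]; simpl.
  rewrite dinExtend_at_dinatural_C, comp_assoc, dinExtend_at_comp_dom, dinExtend_at_comp_cod.
  rewrite !smap_quad_comp.
  simpl_comp.
  reflexivity.
Qed.

End DinaturalExtension.

Theorem mainTheorem1 (A C : Cat) (Gamma P : SetFunctor (quadCat A C))
  (h : forall zx : ob (prodCat A C),
         precomp Gamma (reorderAC A C) (zx, zx) -> precomp P (reorderAC A C) (zx, zx))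
  (hdin : @dinatural (prodCat A C) (precomp Gamma (reorderAC A C)) (precomp P (reorderAC A C)) h) :
  exists J : forall abx : ob (tripCat A C),
               JSource Gamma (abx, abx) -> JTarget P (abx, abx),
    @dinatural (tripCat A C) (JSource Gamma) (JTarget P) J /\
    (forall (z : ob A) (x : ob C) (k : Gamma (((z, z), x), x)),
        J ((z, z), x) (idm z, k) = h (z, x) k).
Proof.
  exists (@dinExtend A C Gamma P h).
  split.
  - exact (@dinExtend_dinatural A C Gamma P h hdin).
  - intros z x k; exact (@dinExtend_at_idm A C Gamma P h z x k).
Qed.
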